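(* Let $\mathcal W$ be a discrete memoryless channel from a finite set $\mathcal X$ to a finite set $\mathcal Y$ and $\alpha\in(0,1)\cup(1,\infty)$. Then $$U_\alpha(\mathcal W)=\min_{Q_Y\in\mathcal P(\mathcal Y)}\max_{x\in\mathcal X}D_\alpha\big(Q_Y\|\mathcal W(\cdot|x)\big).$$
   Context: For $\alpha\in(0,1)\cup(1,\infty)$, $D_\alpha(P\|Q)=\frac1{\alpha-1}\log\sum_{x:P(x)>0}P(x)^\alpha Q(x)^{1-\alpha}$ ($+\infty$ if $\alpha>1$ and $P\not\ll Q$). The Rényi $\alpha$-umlaut information of the channel is $U_\alpha(\mathcal W)=\max_{P_X\in\mathcal P(\mathcal X)}\min_{Q_Y\in\mathcal P(\mathcal Y)}D_\alpha(P_X\times Q_Y\|P_{XY})$ with $P_{XY}(x,y)=P_X(x)\mathcal W(y|x)$. *)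

From HB Require Import structures.
From mathcomp Require Import all_boot all_order all_algebra.
From mathcomp Require Import all_classical all_reals all_analysis.
Set Implicit Arguments. Unset Strict Implicit. Unset Printing Implicit Defensive.
Import Order.TTheory GRing.Theory Num.Theory.
Local Open Scope classical_set_scope.
Local Open Scope ring_scope.

Definition is_pmf (R : realType) (T : finType) (P : T -> R) : Prop :=
  (forall t, 0 <= P t) /\ \sum_(t : T) P t = 1.

Definition pmfs (R : realType) (T : finType) : set (T -> R) :=
  [set P | is_pmf P].

(* Renyi divergence of order a (a in (0,1) u (1,oo)), extended-real valued,
   with the conventions log 0 = -oo and D = +oo if a > 1 and P not << Q. *)
Definition renyiD (R : realType) (T : finType) (a : R) (P Q : T -> R) : \bar R :=
  if (1 < a) && ~~ [forall t, (Q t == 0) ==> (P t == 0)] then +oo%E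
  else
    let s := \sum_(t : T | 0 < P t) P t `^ a * Q t `^ (1 - a) in
    if s == 0 then (if a < 1 then +oo%E else -oo%E)
    else ((a - 1)^-1 * ln s)%:E.

Definition prodPQ (R : realType) (X Y : finType) (P : X -> R) (Q : Y -> R)
  : X * Y -> R := fun xy => P xy.1 * Q xy.2.
Definition jointPW (R : realType) (X Y : finType) (P : X -> R) (W : X -> Y -> R)
  : X * Y -> R := fun xy => P xy.1 * W xy.1 xy.2.

Definition umlautU (R : realType) (X Y : finType) (a : R) (W : X -> Y -> R) : \bar R :=
  ereal_sup [set ereal_inf [set renyiD a (prodPQ P Q) (jointPW P W) | Q in @pmfs R Y]
            | P in @pmfs R X].

Definition maxD (R : realType) (X Y : finType) (a : R) (W : X -> Y -> R) (Q : Y -> R)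
  : \bar R := \big[maxe/-oo%E]_(x : X) renyiD a Q (W x).

From HB Require Import structures.
From mathcomp Require Import all_boot all_order all_algebra.
From mathcomp Require Import all_classical all_reals all_analysis.
From mathcomp Require Import lra ring.
Set Implicit Arguments. Unset Strict Implicit. Unset Printing Implicit Defensive.
Import Order.TTheory GRing.Theory Num.Theory.
Local Open Scope classical_set_scope.
Local Open Scope ring_scope.
Import numFieldNormedType.Exports.
Import ArrowAsProduct.

(* For Q >= 0 put s_x(Q) = \sum_y Q(y)^a W(y|x)^(1-a).  Unless a > 1 and Q
   charges an output that W(.|x) misses for some x (with P(x) > 0 in the
   joint case), where both divergences are +oo, we have
   D_a(Q || W(.|x)) = (a-1)^-1 ln s_x(Q) and
   D_a(P x Q || P W) = (a-1)^-1 ln \sum_x P(x) s_x(Q).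
   As t |-> (a-1)^-1 ln t is monotone, the theorem is a minimax equality for
   the payoff \sum_x P(x) s_x(Q), which is linear in P and convex (a > 1) or
   concave (a < 1) in Q, Q ranging over a compact convex set of
   distributions.  Compactness gives an optimal Q; that some mixed P
   guarantees the value up to any eps > 0 against every Q is the regret bound
   of the multiplicative-weights (Hedge) algorithm. *)

Lemma ln1Dx_ge (R : realType) (u : R) : 0 <= u <= 1 -> u - u ^+ 2 <= ln (1 + u).
Proof.
move=> /andP[u0 u1].
have u1p : 0 < 1 + u by rewrite ltr_pwDl.
have h : -1 < - (u / (1 + u)) by rewrite ltrN2 ltr_pdivrMr // mul1r; lra.
have := le_ln1Dx h.
have -> : 1 - u / (1 + u) = (1 + u)^-1 by field; rewrite gt_eqF.
rewrite lnV ?posrE // lerN2; apply: le_trans.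
rewrite ler_pdivlMr //.
have : 0 <= u ^+ 3 by rewrite exprn_ge0.
rewrite !expr2 exprS expr2; nra.
Qed.

Lemma psumr_gt0 (R : numDomainType) (T : finType) (F : T -> R) :
  (0 < #|T|)%N -> (forall i, 0 < F i) -> 0 < \sum_i F i.
Proof.
case/card_gt0P=> t _ F0; rewrite (bigD1 t) //= ltr_pwDl // sumr_ge0 // => i _.
exact/ltW.
Qed.

Lemma bigmax0_attained (R : realDomainType) (T : finType) (F : T -> R) :
  (0 < #|T|)%N -> (forall i, 0 <= F i) -> exists i, \big[Num.max/0]_j F j = F i.
Proof.
case/card_gt0P=> t _ F0.
have /bigmax_geP[le0|[i _ Fi]] := lexx (\big[Num.max/0]_j F j).
  by exists t; apply/le_anti; rewrite le_bigmax (le_trans le0).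
by exists i; apply/le_anti; rewrite Fi le_bigmax.
Qed.

Lemma lee_fin_approx (R : realType) (x y : \bar R) :
  (forall r : R, (r%:E < x)%E -> (r%:E <= y)%E) -> (x <= y)%E.
Proof.
case: x => [x| |]; case: y => [y| |] // h; rewrite ?leey ?leNye //.
- rewrite lee_fin leNgt; apply/negP => yx.
  have := h ((x + y) / 2); rewrite !lte_fin !lee_fin => /(_ ltac:(lra)); lra.
- by have := h (x - 1); rewrite lte_fin => /(_ ltac:(lra)).
- by have := h (y + 1) (ltry _); rewrite lee_fin => ?; exfalso; lra.
- by have := h 0 (ltry _).
Qed.

Definition mix (R : realType) (Y : Type) (l : R) (Q1 Q2 : Y -> R) : Y -> R :=
  fun y => l * Q1 y + (1 - l) * Q2 y.

Section Hedge.
Variables (R : realType) (X : finType) (Y : Type).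
Variables (K : set (Y -> R)) (g : X -> (Y -> R) -> R) (v : R).
Hypothesis X0 : (0 < #|X|)%N.
Hypothesis g01 : forall x Q, K Q -> 0 <= g x Q <= 1.
Hypothesis K_mix : forall l Q1 Q2, 0 <= l <= 1 -> K Q1 -> K Q2 -> K (mix l Q1 Q2).
Hypothesis g_convex : forall x l Q1 Q2, 0 <= l <= 1 -> K Q1 -> K Q2 ->
  g x (mix l Q1 Q2) <= l * g x Q1 + (1 - l) * g x Q2.
Hypothesis g_ge : forall Q, K Q -> exists x, v <= g x Q.

Definition positive_pmf (P : X -> R) := (forall x, 0 < P x) /\ \sum_x P x = 1.

Definition normalize (w : X -> R) : X -> R := fun x => w x / \sum_z w z.

Lemma normalize_pmf (w : X -> R) : (forall x, 0 < w x) -> positive_pmf (normalize w).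
Proof.
move=> w0; have S0 := psumr_gt0 X0 w0.
by split => [x|]; rewrite /normalize ?divr_gt0 // -mulr_suml mulfV ?gt_eqF.
Qed.

Section AlwaysBadResponse.
Variables (eps : R) (resp : (X -> R) -> Y -> R).
Hypothesis eps0 : 0 < eps.
Hypothesis eps1 : eps <= 1.
Hypothesis resp_bad : forall P, positive_pmf P ->
  K (resp P) /\ \sum_x P x * g x (resp P) < v - eps.

Let eta := eps / 2.
Let eta_gt0 : 0 < eta. Proof. by rewrite divr_gt0. Qed.
Let eta_le1 : eta <= 1.
Proof. by rewrite ler_pdivrMr // mul1r (le_trans eps1) ?ler1n. Qed.

Fixpoint weight (n : nat) : X -> R :=
  if n is n'.+1 then
    fun x => weight n' x * (1 + eta * g x (resp (normalize (weight n'))))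
  else fun=> 1.

Let response n := resp (normalize (weight n)).

Lemma weight_gt0 n x : 0 < weight n x.
Proof.
elim: n x => [//|n IH] x /=.
have [Kr _] := resp_bad (normalize_pmf IH).
have /andP[g0 _] := g01 x Kr.
have : 0 <= eta * g x (resp (normalize (weight n))) by rewrite mulr_ge0 // ltW.
by move=> ?; rewrite mulr_gt0 ?IH //; lra.
Qed.

Lemma response_in_K n : K (response n).
Proof. exact: (resp_bad (normalize_pmf (weight_gt0 n))).1. Qed.

Let total n := \sum_x weight n x.

Let total_gt0 n : 0 < total n.
Proof. exact/psumr_gt0/weight_gt0. Qed.

Let value_ge0 : 0 <= v - eps.
Proof.
have [K0 lt0] := resp_bad (normalize_pmf (weight_gt0 0)).
apply/ltW/(le_lt_trans _ lt0)/sumr_ge0 => x _.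
rewrite mulr_ge0 //; first exact/ltW/(normalize_pmf (weight_gt0 0)).1.
by case/andP: (g01 x K0).
Qed.

(* The total weight grows by the factor 1 + eta * (expected gain), and the
   expected gain of the normalized weights is below v - eps. *)
Lemma total_step n : total n.+1 <= total n * (1 + eta * (v - eps)).
Proof.
have [_ bad] := resp_bad (normalize_pmf (weight_gt0 n)).
rewrite /total /=.
under eq_bigr do rewrite mulrDr mulr1.
rewrite big_split /= mulrDr mulr1 lerD2l.
have -> : \sum_x weight n x * (eta * g x (response n)) =
    total n * (eta * \sum_x normalize (weight n) x * g x (response n)).
  rewrite mulr_sumr mulr_sumr; apply: eq_bigr => x _.
  have := total_gt0 n; rewrite /normalize /total => ?.
  by field; rewrite gt_eqF.
by rewrite ler_pM2l ?total_gt0 // ler_pM2l // ltW.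
Qed.

Lemma ln_total_le n : ln (total n) <= ln #|X|%:R + n%:R * (eta * (v - eps)).
Proof.
elim: n => [|n IH]; first by rewrite mul0r addr0 /total /= sumr_const.
have ge0 : 0 <= eta * (v - eps) by rewrite mulr_ge0 // ltW.
apply: (@le_trans _ _ (ln (total n * (1 + eta * (v - eps))))).
  by rewrite ler_ln ?posrE ?mulr_gt0 ?total_gt0 ?total_step //; lra.
rewrite lnM ?posrE ?total_gt0 //; last lra.
have := le_ln1Dx (_ : -1 < eta * (v - eps)) => /(_ ltac:(lra)) ln1.
apply: le_trans (lerD IH ln1) _; rewrite -nat1r; lra.
Qed.

Lemma ln_weight_ge n x :
  eta * \sum_(t < n) g x (response t) - n%:R * eta ^+ 2 <= ln (weight n x).
Proof.
elim: n => [|n IH]; first by rewrite big_ord0 mulr0 mul0r subr0 /= ln1.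
have /andP[g0 g1] := g01 x (response_in_K n).
set u := eta * g x (response n).
have u0 : 0 <= u by rewrite mulr_ge0 // ltW.
have u_eta : u <= eta by rewrite ler_piMr // ltW.
have u01 : 0 <= u <= 1 by rewrite u0 (le_trans u_eta).
have u2 : u ^+ 2 <= eta ^+ 2 by rewrite !expr2 ler_pM.
have -> : weight n.+1 x = weight n x * (1 + u) by [].
rewrite lnM ?posrE ?weight_gt0 //; last lra.
have := lerD IH (ln1Dx_ge u01); rewrite big_ord_recr /= -nat1r.
move: u2; rewrite /u => u2 h; rewrite mulrDr mulrDl mul1r; lra.
Qed.

Lemma ln_weight_le n x : ln (weight n x) <= ln (total n).
Proof.
rewrite ler_ln ?posrE ?weight_gt0 ?total_gt0 // /total (bigD1 x) //= lerDl.
by rewrite sumr_ge0 // => i _; exact/ltW/weight_gt0.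
Qed.

Fixpoint average (n : nat) : Y -> R :=
  if n is n'.+1 then mix (n%:R / n.+1%:R) (average n') (response n)
  else response 0.

Lemma average_spec n : K (average n) /\
  forall x, n.+1%:R * g x (average n) <= \sum_(t < n.+1) g x (response t).
Proof.
elim: n => [|n [IH1 IH2]].
  by split=> [|x]; [exact: response_in_K | rewrite big_ord1 mul1r].
have l01 : 0 <= (n.+1%:R / n.+2%:R : R) <= 1.
  by rewrite divr_ge0 //= ler_pdivrMr ?ltr0n // mul1r ler_nat.
split=> [|x]; first exact: K_mix l01 IH1 (response_in_K _).
rewrite big_ord_recr /=.
apply: le_trans (_ : n.+2%:R * (n.+1%:R / n.+2%:R * g x (average n) +
    (1 - n.+1%:R / n.+2%:R) * g x (response n.+1)) <= _).
  by rewrite ler_pM2l ?ltr0n //; apply: g_convex => //; exact: response_in_K.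
have -> : n.+2%:R * (n.+1%:R / n.+2%:R * g x (average n) +
    (1 - n.+1%:R / n.+2%:R) * g x (response n.+1)) =
    n.+1%:R * g x (average n) + g x (response n.+1) :> R.
  by field; rewrite -natrD pnatr_eq0.
by rewrite lerD2r.
Qed.

(* Some x earns v against the average of N+1 responses, hence its weight is at
   least exp(eta (N+1) v - (N+1) eta^2) while the total weight is at most
   |X| exp(eta (N+1) (v - eps)); this fails once N > 4 ln |X| / eps^2. *)
Lemma bad_response_contradiction : False.
Proof.
have e0 := eps0; have e1 := eps1.
pose c := ln (#|X|%:R : R).
have c0 : 0 <= c by rewrite /c ln_ge0 // ler1n.
pose N := Num.Def.archi_bound (4 * c / eps ^+ 2).
have hN : 4 * c / eps ^+ 2 < N%:R.
  by apply: archi_boundP; rewrite divr_ge0 ?mulr_ge0 ?exprn_ge0 //; lra.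
have [KN avg_ge] := average_spec N.
have [x vx] := g_ge KN.
have gain_ge : eta * (N.+1%:R * v) <= eta * \sum_(t < N.+1) g x (response t).
  by rewrite ler_pM2l //; apply: le_trans (avg_ge x); rewrite ler_pM2l ?ltr0n.
have := ln_weight_ge N.+1 x; have := ln_weight_le N.+1 x; have := ln_total_le N.+1.
move: gain_ge; rewrite /eta -/c; set T := N.+1%:R.
move=> gain_ge total_le weight_le weight_ge.
have T_small : T * (eps ^+ 2 / 4) <= c by rewrite expr2; lra.
have : 4 * c / eps ^+ 2 < T by apply: (lt_le_trans hN); rewrite ler_nat.
by rewrite ltr_pdivrMr ?exprn_gt0 // expr2; move: T_small; rewrite expr2; nra.
Qed.

End AlwaysBadResponse.

Lemma hedge eps : 0 < eps -> exists P : X -> R,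
  positive_pmf P /\ forall Q, K Q -> v - eps <= \sum_x P x * g x Q.
Proof.
wlog eps1 : eps / eps <= 1.
  move=> H e0; have [le1|lt1] := leP eps 1; first exact: H.
  have [P [hP le]] := H 1 (lexx _) ltr01.
  by exists P; split => // Q KQ; apply: le_trans (le Q KQ); lra.
move=> e0; apply: contrapT => noP.
have bad P : exists Q, positive_pmf P -> K Q /\ \sum_x P x * g x Q < v - eps.
  have [[Q [KQ lt]]|noQ] := pselect (exists Q, K Q /\ \sum_x P x * g x Q < v - eps).
    by exists Q.
  exists (fun=> 0) => hP; exfalso; apply: noP; exists P; split => // Q KQ.
  by rewrite leNgt; apply/negP => lt; apply: noQ; exists Q.
pose resp P := proj1_sig (cid (bad P)).
exact: (bad_response_contradiction e0 eps1 (fun P => proj2_sig (cid (bad P)))).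
Qed.

End Hedge.

Lemma continuous_powR_max0 (R : realType) (a : R) :
  0 < a -> continuous (fun q : R => (Num.max q 0) `^ a).
Proof.
move=> a0 q0; rewrite /continuous_at.
have [q0neg|q0pos|->] := ltgtP q0 0.
- rewrite powR0 ?gt_eqF //.
  apply: cvg_trans (near_eq_cvg _) (cvg_cst 0).
  near=> q; rewrite max_r ?powR0 ?gt_eqF //; apply: ltW.
  near: q; exact: lt_nbhsl.
- have h : {near q0, (fun q => expR (a * ln q)) =1 (fun q : R => (Num.max q 0) `^ a)}.
    near=> q.
    have hq : 0 < q by near: q; exact: lt_nbhsr.
    by rewrite max_l ?ltW // /powR gt_eqF.
  have -> : q0 `^ a = expR (a * ln q0) by rewrite /powR gt_eqF.
  apply: cvg_trans (near_eq_cvg h) _.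
  apply: (@continuous_comp _ _ _ (fun q => a * ln q) expR).
    apply: cvgMl_tmp; exact: continuous_ln.
  exact: continuous_expR.
- apply/cvgrPdist_le => e e0.
  have d0 : 0 < e `^ a^-1 by rewrite powR_gt0.
  near=> t.
  rewrite powR0 ?gt_eqF // sub0r normrN ger0_norm ?powR_ge0 //.
  have -> : e = (e `^ a^-1) `^ a by rewrite -powRrM mulVf ?gt_eqF // powRr1 // ltW.
  apply: ge0_ler_powR.
  - exact: ltW.
  - by rewrite nnegrE le_max lexx orbT.
  - by rewrite nnegrE ltW.
  - rewrite ge_max (ltW d0) andbT.
    near: t; exact: nbhs0_ltW.
Unshelve. all: by end_near.
Qed.

Lemma powR_mix_le (R : realType) (p l q1 q2 : R) : 1 <= p -> 0 <= l <= 1 ->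
  0 <= q1 -> 0 <= q2 -> (l * q1 + (1 - l) * q2) `^ p <= l * q1 `^ p + (1 - l) * q2 `^ p.
Proof.
move=> p1 /andP[l0 l1] h1 h2.
have := @convex_powR R p p1 (Itv01 l0 l1) q1 q2.
rewrite !inE /= !in_itv /= h1 h2 => /(_ erefl erefl).
by rewrite !convRE.
Qed.

Lemma powR_mix_ge (R : realType) (p l q1 q2 : R) : 0 < p <= 1 -> 0 <= l <= 1 ->
  0 <= q1 -> 0 <= q2 -> l * q1 `^ p + (1 - l) * q2 `^ p <= (l * q1 + (1 - l) * q2) `^ p.
Proof.
move=> /andP[p0 p1] l01 h1 h2; have /andP[l0 l1] := l01.
have pV1 : 1 <= p^-1 by rewrite invf_ge1.
have := powR_mix_le pV1 l01 (powR_ge0 q1 p) (powR_ge0 q2 p).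
rewrite -!powRrM mulfV ?gt_eqF // !powRr1 // => h.
have := @ge0_ler_powR R p (ltW p0) _ _ _ _ h.
rewrite -powRrM mulVf ?gt_eqF // powRr1; first apply.
- by rewrite nnegrE powR_ge0.
- by rewrite nnegrE addr_ge0 // mulr_ge0 // subr_ge0.
- by rewrite addr_ge0 // mulr_ge0 ?powR_ge0 // subr_ge0.
Qed.

Lemma continuous_sum (R : realType) (Y : finType) (T : topologicalType)
    (F : Y -> T -> R) :
  (forall y, continuous (F y)) -> continuous (fun Q => \sum_y F y Q).
Proof.
move=> F_cont.
suff H s : continuous (fun Q => \sum_(y <- s) F y Q).
  by under eq_fun do rewrite -big_enum; exact: H.
elim: s => [|y s IH] Q.
  by under eq_fun do rewrite big_nil; exact: cst_continuous.
by under eq_fun do rewrite big_cons; apply: continuousD; [exact: F_cont|exact: IH].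
Qed.

Lemma continuous_bigmax0 (R : realType) (X : finType) (T : topologicalType)
    (F : X -> T -> R) :
  (forall x, continuous (F x)) -> continuous (fun Q => \big[Num.max/0]_x F x Q).
Proof.
move=> F_cont.
suff H s : continuous (fun Q => \big[Num.max/0]_(x <- s) F x Q).
  by under eq_fun do rewrite -big_enum; exact: H.
elim: s => [|x s IH] Q.
  by under eq_fun do rewrite big_nil; exact: cst_continuous.
by under eq_fun do rewrite big_cons; apply: continuous_max; [exact: F_cont|exact: IH].
Qed.

Section Simplex.
Variables (R : realType) (Y : finType).

Definition simplex_on (S : pred Y) : set (Y -> R) :=
  [set Q | (forall y, 0 <= Q y) /\ (forall y, ~~ S y -> Q y = 0) /\ \sum_y Q y = 1].

Lemma simplex_onT Q : simplex_on predT Q <-> is_pmf Q.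
Proof. by split => [[Q0 [_ Q1]]|[Q0 Q1]]. Qed.

Lemma simplex_on_pmf S Q : simplex_on S Q -> is_pmf Q.
Proof. by case=> Q0 [_ Q1]. Qed.

Lemma simplex_on_mix S l Q1 Q2 : 0 <= l <= 1 ->
  simplex_on S Q1 -> simplex_on S Q2 -> simplex_on S (mix l Q1 Q2).
Proof.
move=> /andP[l0 l1] [a1 [b1 c1]] [a2 [b2 c2]]; split; last split.
- by move=> y; rewrite /mix addr_ge0 // mulr_ge0 // subr_ge0.
- by move=> y Sy; rewrite /mix b1 // b2 // !mulr0 addr0.
- by rewrite /mix big_split /= -!mulr_sumr c1 c2; ring.
Qed.

Lemma simplex_on_compact S : compact (simplex_on S).
Proof.
have box : compact [set Q : Y -> R | forall y, `[0, 1]%classic (Q y)].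
  apply: (@tychonoff Y (fun _ => R) (fun _ => `[0, 1]%classic)) => y.
  exact: segment_compact.
pose coord y (Q : Y -> R) := Q y.
have coord_cont y : continuous (coord y) by exact: (@proj_continuous Y (fun _ => R) y).
have -> : simplex_on S =
    (\bigcap_(y in setT) (coord y @^-1` [set r : R | 0 <= r])) `&`
    ((\bigcap_(y in [set y | ~~ S y]) (coord y @^-1` [set r | r = 0])) `&`
    ((fun Q : Y -> R => \sum_y Q y) @^-1` [set r | r = 1])).
  apply/seteqP; split => Q /=.
    by move=> [h1 [h2 h3]]; split; [move=> y _; exact: h1|split => // y; exact: h2].
  by move=> [h1 [h2 h3]]; split; [move=> y; exact: h1|split => // y; exact: h2].
apply: subclosed_compact box _ => [|Q [Q0 [_ Q1]] y /=].
  apply: closedI; [|apply: closedI].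
  - apply: closed_bigI => y _; apply: preimage_closed; last exact: closed_ge.
    by move=> Q _; exact: coord_cont.
  - apply: closed_bigI => y _; apply: preimage_closed; last exact: closed_eq.
    by move=> Q _; exact: coord_cont.
  - apply: preimage_closed; last exact: closed_eq.
    by move=> Q _; apply: continuous_sum.
rewrite in_itv /= Q0 // -Q1 (bigD1 y) //= lerDl sumr_ge0 // => i _; exact: Q0.
Qed.

End Simplex.

Definition max_over (R : realType) (X : finType) (T : Type) (psi : X -> T -> R)
    (Q : T) :=
  \big[Num.max/0]_x psi x Q.

Lemma max_over_ge0 (R : realType) (X : finType) (T : Type) (psi : X -> T -> R) Q :
  0 <= max_over psi Q.
Proof. exact: bigmax_ge_id. Qed.

Section ConvexGame.
Variables (R : realType) (X : finType) (Y : Type).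
Variables (K : set (Y -> R)) (psi : X -> (Y -> R) -> R) (B : R).
Hypothesis X0 : (0 < #|X|)%N.
Hypothesis K_compact : compact K.
Hypothesis K_mix : forall l Q1 Q2, 0 <= l <= 1 -> K Q1 -> K Q2 -> K (mix l Q1 Q2).
Hypothesis psi_cont : forall x, continuous (psi x).
Hypothesis B0 : 0 < B.
Hypothesis psi_bound : forall x Q, K Q -> 0 <= psi x Q <= B.
Hypothesis psi_convex : forall x l Q1 Q2, 0 <= l <= 1 -> K Q1 -> K Q2 ->
  psi x (mix l Q1 Q2) <= l * psi x Q1 + (1 - l) * psi x Q2.

Lemma exists_argmin_max_over : K !=set0 ->
  exists2 Qs, K Qs & forall Q, K Q -> max_over psi Qs <= max_over psi Q.
Proof.
move=> K0; have [|Qs KQs Qs_min] := @compact_EVT_min _ _ (max_over psi) _ K0 K_compact.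
  by apply: continuous_subspaceT; exact: continuous_bigmax0.
by exists Qs => [|Q KQ]; [rewrite -inE | apply: Qs_min; rewrite inE].
Qed.

Lemma minimax_lower_approx Qs :
  K Qs -> (forall Q, K Q -> max_over psi Qs <= max_over psi Q) ->
  forall eps, 0 < eps -> exists P : X -> R, positive_pmf P /\
    forall Q, K Q -> max_over psi Qs - eps <= \sum_x P x * psi x Q.
Proof.
move=> KQs Qs_min eps e0.
have g01 x Q : K Q -> 0 <= psi x Q / B <= 1.
  move=> KQ; have /andP[h1 h2] := psi_bound x KQ.
  by rewrite divr_ge0 ?(ltW B0) //= ler_pdivrMr // mul1r.
have g_convex x l Q1 Q2 : 0 <= l <= 1 -> K Q1 -> K Q2 ->
    psi x (mix l Q1 Q2) / B <= l * (psi x Q1 / B) + (1 - l) * (psi x Q2 / B).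
  move=> l01 K1 K2; rewrite mulrA [_ * (_ / B)]mulrA -mulrDl ler_pM2r ?invr_gt0 //.
  exact: psi_convex.
have g_ge Q : K Q -> exists x, max_over psi Qs / B <= psi x Q / B.
  move=> KQ; have [x maxQ] := @bigmax0_attained _ _ (fun x => psi x Q) X0
    (fun x => proj1 (andP (psi_bound x KQ))).
  by exists x; rewrite ler_pM2r ?invr_gt0 // -maxQ Qs_min.
have [P [hP le]] := hedge X0 g01 K_mix g_convex g_ge (divr_gt0 e0 B0).
exists P; split => // Q KQ.
have := le Q KQ; rewrite -mulrBl.
under eq_bigr do rewrite mulrA; rewrite -mulr_suml.
by rewrite ler_pM2r ?invr_gt0.
Qed.

End ConvexGame.

Lemma pmf_avg_le (R : realType) (T : finType) (P f : T -> R) (m : R) :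
  is_pmf P -> (forall t, f t <= m) -> \sum_t P t * f t <= m.
Proof.
move=> [P0 P1] fm; apply: (@le_trans _ _ (\sum_t P t * m)).
  by apply: ler_sum => t _; rewrite ler_wpM2l.
by rewrite -mulr_suml P1 mul1r.
Qed.

Lemma pmf_avg_ge (R : realType) (T : finType) (P f : T -> R) (m : R) :
  is_pmf P -> (forall t, m <= f t) -> m <= \sum_t P t * f t.
Proof.
move=> [P0 P1] mf; apply: (@le_trans _ _ (\sum_t P t * m)).
  by rewrite -mulr_suml P1 mul1r.
by apply: ler_sum => t _; rewrite ler_wpM2l.
Qed.

Lemma uniform_positive_pmf (R : realType) (T : finType) :
  (0 < #|T|)%N -> positive_pmf (fun _ : T => (#|T|%:R : R)^-1).
Proof.
move=> T0; split=> [t|]; first by rewrite invr_gt0 ltr0n.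
by rewrite sumr_const -[_ *+ _]mulr_natr mulVf // pnatr_eq0 -lt0n.
Qed.

Lemma bigmaxe_homo (R : realType) (T : finType) (F : R -> \bar R) (f : T -> R) :
  (0 < #|T|)%N -> (forall t, 0 <= f t) ->
  (forall s t, f s <= f t -> (F (f s) <= F (f t))%E) ->
  \big[maxe/-oo%E]_t F (f t) = F (\big[Num.max/0]_t f t).
Proof.
move=> T0 f0 F_homo; have [j fj] := bigmax0_attained T0 f0.
apply/le_anti/andP; split; rewrite fj; last exact: le_bigmax.
apply: bigmax_le => [|t _]; first exact: leNye.
by apply: F_homo; rewrite -fj le_bigmax.
Qed.

Definition umlautU_eq_minmax (R : realType) (X Y : finType) (a : R) (W : X -> Y -> R) :=
  exists2 Q : Y -> R, is_pmf Q &
    (forall Q' : Y -> R, is_pmf Q' -> (maxD a W Q <= maxD a W Q')%E) /\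
    umlautU a W = maxD a W Q.

Lemma umlautU_saddle (R : realType) (X Y : finType) (a : R) (W : X -> Y -> R)
    (Qs : Y -> R) :
  is_pmf Qs ->
  (forall Q, is_pmf Q -> (maxD a W Qs <= maxD a W Q)%E) ->
  (forall P, is_pmf P -> (renyiD a (prodPQ P Qs) (jointPW P W) <= maxD a W Qs)%E) ->
  (forall r : R, (r%:E < maxD a W Qs)%E -> exists2 P, is_pmf P &
     forall Q, is_pmf Q -> (r%:E <= renyiD a (prodPQ P Q) (jointPW P W))%E) ->
  umlautU_eq_minmax a W.
Proof.
move=> Qs_pmf Qs_min upper lower; exists Qs => //; split => //.
rewrite /umlautU; apply/le_anti/andP; split.
  apply: ge_ereal_sup => _ [P P_pmf <-]; apply: le_trans (upper P P_pmf).
  by apply: ereal_inf_lbound; exists Qs.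
apply: lee_fin_approx => r lt_r; have [P P_pmf le_r] := lower r lt_r.
apply: le_ereal_sup_tmp.
exists (ereal_inf [set renyiD a (prodPQ P Q) (jointPW P W) | Q in @pmfs R Y]).
  by exists P.
by apply: le_ereal_inf_tmp => _ [Q Q_pmf <-]; exact: le_r.
Qed.

Section Renyi.
Variables (R : realType) (X Y : finType) (W : X -> Y -> R) (a : R).
Hypothesis HX : (0 < #|X|)%N.
Hypothesis HW : forall x, is_pmf (W x).
Hypothesis a0 : 0 < a.

Let W_ge0 x y : 0 <= W x y. Proof. exact: (HW x).1. Qed.

(* The positive part makes [rsum x] continuous on all of [Y -> R]; on
   nonnegative [Q] it is the sum \sum_y Q(y)^a W(y|x)^(1-a). *)
Definition rsum x (Q : Y -> R) := \sum_y (Num.max (Q y) 0) `^ a * W x y `^ (1 - a).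

Definition Dsum (s : R) : \bar R :=
  if s == 0 then (if a < 1 then +oo%E else -oo%E) else ((a - 1)^-1 * ln s)%:E.

Definition abscont (Q : Y -> R) x := [forall y, (W x y == 0) ==> (Q y == 0)].

Lemma rsumE x Q : (forall y, 0 <= Q y) -> rsum x Q = \sum_y Q y `^ a * W x y `^ (1 - a).
Proof. by move=> Q0; apply: eq_bigr => y _; rewrite max_l. Qed.

Lemma rsum_ge0 x Q : 0 <= rsum x Q.
Proof. by rewrite sumr_ge0 // => y _; rewrite mulr_ge0 ?powR_ge0. Qed.

Lemma sum_support_powR (Q c : Y -> R) : (forall y, 0 <= Q y) ->
  \sum_(y | 0 < Q y) Q y `^ a * c y = \sum_y Q y `^ a * c y.
Proof.
move=> Q0; rewrite big_mkcond; apply: eq_bigr => y _.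
case: ifP => // /negbT; rewrite lt_def negb_and negbK Q0 orbF => /eqP ->.
by rewrite powR0 ?mul0r // gt_eqF.
Qed.

Lemma renyiD_channel x Q : (forall y, 0 <= Q y) ->
  renyiD a Q (W x) = if (1 < a) && ~~ abscont Q x then +oo%E else Dsum (rsum x Q).
Proof. by move=> Q0; rewrite /renyiD sum_support_powR // -rsumE. Qed.

Lemma joint_abscont P Q : (forall x, 0 <= P x) ->
  [forall t, (jointPW P W t == 0) ==> (prodPQ P Q t == 0)] =
  [forall x, (0 < P x) ==> abscont Q x].
Proof.
move=> P0; apply/forallP/forallP.
- move=> h x; apply/implyP => Px; apply/forallP => y; apply/implyP => /eqP Wxy.
  have := h (x, y); rewrite /jointPW /prodPQ /= Wxy mulr0 eqxx /=.
  by rewrite mulf_eq0 gt_eqF.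
- move=> h [x y]; rewrite /jointPW /prodPQ /=; apply/implyP.
  rewrite mulf_eq0 => /orP[/eqP ->|Wxy]; first by rewrite mul0r.
  have [Px|] := ltP 0 (P x).
    have := h x; rewrite Px => /forallP /(_ y).
    by rewrite Wxy => /eqP ->; rewrite mulr0.
  move=> Px; have -> : P x = 0 by apply/le_anti; rewrite Px P0.
  by rewrite mul0r.
Qed.

Lemma joint_sum P Q : (forall x, 0 <= P x) -> (forall y, 0 <= Q y) ->
  \sum_(t | 0 < prodPQ P Q t) prodPQ P Q t `^ a * jointPW P W t `^ (1 - a) =
  \sum_x P x * rsum x Q.
Proof.
move=> P0 Q0; transitivity (\sum_x \sum_y if 0 < prodPQ P Q (x, y)
    then prodPQ P Q (x, y) `^ a * jointPW P W (x, y) `^ (1 - a) else 0).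
  by rewrite big_mkcond pair_bigA; apply: eq_bigr => -[x y].
apply: eq_bigr => x _.
rewrite rsumE // mulr_sumr; apply: eq_bigr => y _; rewrite /prodPQ /jointPW /=.
case: ifP => [PQ_gt0|/negbT].
  rewrite !powRM ?P0 ?Q0 ?W_ge0 //.
  by rewrite mulrACA -powRD ?subrKC ?oner_eq0 // powRr1 ?P0.
rewrite lt_def negb_and negbK mulr_ge0 ?P0 ?Q0 // orbF mulf_eq0.
by case/orP=> /eqP ->; rewrite ?mul0r // powR0 ?gt_eqF // mul0r mulr0.
Qed.

Lemma renyiD_joint P Q : (forall x, 0 <= P x) -> (forall y, 0 <= Q y) ->
  renyiD a (prodPQ P Q) (jointPW P W) =
  if (1 < a) && ~~ [forall x, (0 < P x) ==> abscont Q x] then +oo%E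
  else Dsum (\sum_x P x * rsum x Q).
Proof. by move=> P0 Q0; rewrite /renyiD joint_abscont // joint_sum. Qed.

Definition rsum_ub := \sum_x \sum_y W x y `^ (1 - a) + 1.

Lemma rsum_ub_gt0 : 0 < rsum_ub.
Proof.
by rewrite ltr_pwDr // !sumr_ge0 // => x _; rewrite sumr_ge0 // => y _; exact: powR_ge0.
Qed.

Lemma rsum_le_ub x Q : is_pmf Q -> rsum x Q <= rsum_ub.
Proof.
move=> [Q0 Q1]; rewrite rsumE //.
apply: (@le_trans _ _ (\sum_x \sum_y W x y `^ (1 - a))); last by rewrite lerDl.
apply: (@le_trans _ _ (\sum_y W x y `^ (1 - a))).
  apply: ler_sum => y _; rewrite ler_piMl ?powR_ge0 //.
  have -> : (1 : R) = 1 `^ a by rewrite powR1.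
  rewrite ge0_ler_powR ?nnegrE ?(ltW a0) //.
  by rewrite -Q1 (bigD1 y) //= lerDl sumr_ge0.
rewrite (bigD1 x) //= lerDl sumr_ge0 // => x' _.
by rewrite sumr_ge0 // => y _; exact: powR_ge0.
Qed.

Lemma continuous_rsum x : continuous (rsum x).
Proof.
apply: continuous_sum => y Q.
apply: (@continuousM R _ (fun Q : Y -> R => (Num.max (Q y) 0) `^ a)
  (fun=> W x y `^ (1 - a))).
  2: exact: cst_continuous.
apply: (@continuous_comp _ _ _ (fun Q : Y -> R => Q y) (fun q => (Num.max q 0) `^ a)).
  exact: (@proj_continuous Y (fun _ => R) y).
exact: continuous_powR_max0.
Qed.

Lemma rsum_mix x l Q1 Q2 : 0 <= l <= 1 ->
  (forall y, 0 <= Q1 y) -> (forall y, 0 <= Q2 y) ->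
  rsum x (mix l Q1 Q2) = \sum_y (l * Q1 y + (1 - l) * Q2 y) `^ a * W x y `^ (1 - a).
Proof.
move=> /andP[l0 l1] Q10 Q20; apply: eq_bigr => y _; rewrite /mix max_l //.
by rewrite addr_ge0 // mulr_ge0 // subr_ge0.
Qed.

Lemma rsum_convex x l Q1 Q2 : 1 <= a -> 0 <= l <= 1 ->
  (forall y, 0 <= Q1 y) -> (forall y, 0 <= Q2 y) ->
  rsum x (mix l Q1 Q2) <= l * rsum x Q1 + (1 - l) * rsum x Q2.
Proof.
move=> a1 l01 Q10 Q20; rewrite rsum_mix // !rsumE // !mulr_sumr -big_split /=.
apply: ler_sum => y _; rewrite mulrA [(1 - l) * (_ * _)]mulrA -mulrDl.
rewrite ler_wpM2r ?powR_ge0 //; exact: powR_mix_le.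
Qed.

Lemma rsum_concave x l Q1 Q2 : a <= 1 -> 0 <= l <= 1 ->
  (forall y, 0 <= Q1 y) -> (forall y, 0 <= Q2 y) ->
  l * rsum x Q1 + (1 - l) * rsum x Q2 <= rsum x (mix l Q1 Q2).
Proof.
move=> a1 l01 Q10 Q20; rewrite rsum_mix // !rsumE // !mulr_sumr -big_split /=.
apply: ler_sum => y _; rewrite mulrA [(1 - l) * (_ * _)]mulrA -mulrDl.
by rewrite ler_wpM2r ?powR_ge0 //; apply: powR_mix_ge; rewrite ?a0.
Qed.

Lemma Dsum_expR r : a != 1 -> Dsum (expR ((a - 1) * r)) = r%:E.
Proof.
move=> a1; rewrite /Dsum gt_eqF ?expR_gt0 // expRK mulrA mulVf ?mul1r //.
by rewrite subr_eq0.
Qed.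

Lemma Dsum_homo s t : 1 < a -> 0 <= s -> s <= t -> (Dsum s <= Dsum t)%E.
Proof.
move=> a1 s0 st; have [s_eq0|s_neq0] := eqVneq s 0.
  by rewrite /Dsum s_eq0 eqxx ltNge (ltW a1) leNye.
have s_gt0 : 0 < s by rewrite lt_def s_neq0.
rewrite /Dsum (negbTE s_neq0) gt_eqF ?(lt_le_trans s_gt0) // lee_fin.
rewrite ler_pM2l ?invr_gt0 ?subr_gt0 //.
by rewrite ler_ln ?posrE // (lt_le_trans s_gt0).
Qed.

Lemma Dsum_anti s t : a < 1 -> 0 <= s -> s <= t -> (Dsum t <= Dsum s)%E.
Proof.
move=> a1 s0 st; have [s_eq0|s_neq0] := eqVneq s 0.
  by rewrite /Dsum s_eq0 eqxx a1 leey.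
have s_gt0 : 0 < s by rewrite lt_def s_neq0.
rewrite /Dsum (negbTE s_neq0) gt_eqF ?(lt_le_trans s_gt0) // lee_fin.
rewrite ler_nM2l ?invr_lt0 ?subr_lt0 //.
by rewrite ler_ln ?posrE // (lt_le_trans s_gt0).
Qed.

Section OrderAbove1.
Hypothesis a1 : 1 < a.

Definition common_support : pred Y := fun y => [forall x, 0 < W x y].

Let K : set (Y -> R) := simplex_on common_support.

Lemma simplex_abscont Q x : K Q -> abscont Q x.
Proof.
move=> [_ [Q_supp _]]; apply/forallP => y; apply/implyP => /eqP Wxy.
by rewrite Q_supp //; apply/negP => /forallP /(_ x); rewrite Wxy ltxx.
Qed.

Lemma not_simplex_abscont Q : is_pmf Q -> ~ K Q -> exists x, ~~ abscont Q x.
Proof.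
move=> [Q0 Q1] notK.
have [y [/forallPn [x Wxy] Qy]] : exists y, ~~ common_support y /\ Q y != 0.
  apply/not_existsP => h; apply: notK; split => //; split => // y Sy.
  by apply/eqP/negPn/negP => Qy; apply: (h y).
exists x; apply/forallPn; exists y; rewrite negb_imply Qy andbT.
by apply/eqP/le_anti; rewrite W_ge0 andbT leNgt.
Qed.

Lemma maxD_simplex Q : K Q -> maxD a W Q = Dsum (max_over rsum Q).
Proof.
move=> KQ; have [Q0 _] := KQ.
rewrite /maxD; under eq_bigr do rewrite renyiD_channel // simplex_abscont // andbF.
apply: bigmaxe_homo => // [x|x x'] ; first exact: rsum_ge0.
exact/Dsum_homo/rsum_ge0.
Qed.

Lemma maxD_not_simplex Q : is_pmf Q -> ~ K Q -> maxD a W Q = +oo%E.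
Proof.
move=> Q_pmf notK; have [x not_ac] := not_simplex_abscont Q_pmf notK.
apply/eqP; rewrite eq_le leey /=; apply: le_trans (le_bigmax _ _ x).
by rewrite renyiD_channel ?a1 ?not_ac //; case: Q_pmf.
Qed.

Lemma joint_simplex P Q : is_pmf P -> K Q ->
  renyiD a (prodPQ P Q) (jointPW P W) = Dsum (\sum_x P x * rsum x Q).
Proof.
move=> [P0 _] KQ; have [Q0 _] := KQ.
suff ac : [forall x, (0 < P x) ==> abscont Q x] by rewrite renyiD_joint // ac andbF.
by apply/forallP => x; apply/implyP => _; exact: simplex_abscont.
Qed.

Lemma joint_not_simplex P Q : positive_pmf P -> is_pmf Q -> ~ K Q ->
  renyiD a (prodPQ P Q) (jointPW P W) = +oo%E.
Proof.
move=> [P_gt0 _] Q_pmf notK; have [x not_ac] := not_simplex_abscont Q_pmf notK.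
suff not_ac' : [forall x, (0 < P x) ==> abscont Q x] = false.
  by rewrite renyiD_joint ?a1 ?not_ac' // => [x'|]; [exact: ltW|case: Q_pmf].
by apply/negbTE/forallPn; exists x; rewrite P_gt0.
Qed.

Lemma umlautU_gt1_degenerate : ~ (K !=set0) -> umlautU_eq_minmax a W.
Proof.
move=> K0; have [x0 _] := card_gt0P HX.
have maxD_oo Q : is_pmf Q -> maxD a W Q = +oo%E.
  by move=> Q_pmf; apply: maxD_not_simplex => // KQ; apply: K0; exists Q.
apply: (@umlautU_saddle _ _ _ _ _ (W x0)) => [|Q Q_pmf|P _|r _].
- exact: HW.
- by rewrite !maxD_oo.
- by rewrite maxD_oo ?leey.
have unif := uniform_positive_pmf R HX.
exists (fun=> #|X|%:R^-1); first by split=> [x|]; [exact/ltW/(unif.1 x)|exact: unif.2].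
move=> Q Q_pmf; rewrite joint_not_simplex ?leey // => KQ.
by apply: K0; exists Q.
Qed.

Let K_compact : compact K. Proof. exact: simplex_on_compact. Qed.

Let K_mix l Q1 Q2 : 0 <= l <= 1 -> K Q1 -> K Q2 -> K (mix l Q1 Q2).
Proof. exact: simplex_on_mix. Qed.

Let rsum_bound x Q : K Q -> 0 <= rsum x Q <= rsum_ub.
Proof. by move=> KQ; rewrite rsum_ge0 (rsum_le_ub _ (simplex_on_pmf KQ)). Qed.

Let rsum_convex_K x l Q1 Q2 : 0 <= l <= 1 -> K Q1 -> K Q2 ->
  rsum x (mix l Q1 Q2) <= l * rsum x Q1 + (1 - l) * rsum x Q2.
Proof. by move=> l01 [Q10 _] [Q20 _]; apply: rsum_convex => //; exact: ltW. Qed.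

Lemma umlautU_gt1_nondegenerate : K !=set0 -> umlautU_eq_minmax a W.
Proof.
move=> K0; have [Qs KQs Qs_min] :=
  exists_argmin_max_over K_compact continuous_rsum K0.
have approx :=
  minimax_lower_approx HX K_mix rsum_ub_gt0 rsum_bound rsum_convex_K KQs Qs_min.
apply: (umlautU_saddle (simplex_on_pmf KQs)) => [Q Q_pmf|P P_pmf|r].
- have [KQ|notK] := pselect (K Q); last by rewrite (maxD_not_simplex Q_pmf notK) leey.
  rewrite !maxD_simplex //.
  by apply: (Dsum_homo a1); [exact: max_over_ge0 | exact: Qs_min].
- rewrite joint_simplex // maxD_simplex //; apply: (Dsum_homo a1).
    by apply: sumr_ge0 => x _; rewrite mulr_ge0 ?rsum_ge0 //; case: P_pmf.
  by apply: pmf_avg_le => // x; exact: le_bigmax.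
rewrite maxD_simplex // => lt_r.
set v := max_over rsum Qs in lt_r; set t := expR ((a - 1) * r).
have t_lt_v : t < v.
  rewrite ltNge; apply/negP => v_le_t.
  have := Dsum_homo a1 (max_over_ge0 _ _) v_le_t.
  by rewrite Dsum_expR ?gt_eqF // => /(lt_le_trans lt_r); rewrite ltxx.
have [P [P_pos le_P]] := approx (v - t) ltac:(by rewrite subr_gt0).
have P_pmf : is_pmf P by case: P_pos => P0 P1; split => // x; exact/ltW.
exists P => // Q Q_pmf.
have [KQ|notK] := pselect (K Q); last by rewrite joint_not_simplex ?leey.
rewrite joint_simplex // -(Dsum_expR r) ?gt_eqF //.
apply: (Dsum_homo a1); first exact: expR_ge0.
by have := le_P Q KQ; rewrite opprB addrCA subrr addr0.
Qed.

Lemma umlautU_gt1 : umlautU_eq_minmax a W.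
Proof.
have [K0|K0] := pselect (K !=set0).
  exact: umlautU_gt1_nondegenerate.
exact: umlautU_gt1_degenerate.
Qed.

End OrderAbove1.

Section OrderBelow1.
Hypothesis a1 : a < 1.

Let not_a_gt1 : (1 < a) = false. Proof. by rewrite ltNge (ltW a1). Qed.

(* Concavity of [rsum x] is turned into convexity of [psi x], as required by
   the game lemmas; [rsum_min Q] is then min_x rsum x Q. *)
Let psi x Q := rsum_ub - rsum x Q.
Let rsum_min Q := rsum_ub - max_over psi Q.

Lemma rsum_min_le Q x : rsum_min Q <= rsum x Q.
Proof. by rewrite lerBlDr addrC -lerBlDr; exact: (le_bigmax _ (psi^~ Q)). Qed.

Lemma rsum_min_attained Q : is_pmf Q -> exists x, rsum_min Q = rsum x Q.
Proof.
move=> Q_pmf; have psi0 x : 0 <= psi x Q by rewrite subr_ge0 rsum_le_ub.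
have [x max_x] := bigmax0_attained HX psi0.
by exists x; rewrite /rsum_min /max_over max_x /psi subKr.
Qed.

Lemma rsum_min_ge0 Q : is_pmf Q -> 0 <= rsum_min Q.
Proof. by move=> /rsum_min_attained[x ->]; exact: rsum_ge0. Qed.

Lemma maxD_lt1 Q : is_pmf Q -> maxD a W Q = Dsum (rsum_min Q).
Proof.
move=> Q_pmf; have [Q0 _] := Q_pmf.
rewrite /maxD; under eq_bigr do rewrite renyiD_channel // not_a_gt1.
apply/le_anti/andP; split.
  apply: bigmax_le => [|x _]; first exact: leNye.
  by apply: (Dsum_anti a1) => //; [exact: rsum_min_ge0|exact: rsum_min_le].
by have [x ->] := rsum_min_attained Q_pmf; exact: le_bigmax.
Qed.

Lemma joint_lt1 P Q : is_pmf P -> is_pmf Q ->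
  renyiD a (prodPQ P Q) (jointPW P W) = Dsum (\sum_x P x * rsum x Q).
Proof. by move=> [P0 _] [Q0 _]; rewrite renyiD_joint // not_a_gt1. Qed.

Let K : set (Y -> R) := simplex_on predT.

Let K_compact : compact K. Proof. exact: simplex_on_compact. Qed.

Let K_mix l Q1 Q2 : 0 <= l <= 1 -> K Q1 -> K Q2 -> K (mix l Q1 Q2).
Proof. exact: simplex_on_mix. Qed.

Let psi_continuous x : continuous (psi x).
Proof.
move=> Q; apply: (@continuousB R _ _ (fun=> rsum_ub) (rsum x)).
  exact: cst_continuous.
exact: continuous_rsum.
Qed.

Let psi_bound x Q : K Q -> 0 <= psi x Q <= rsum_ub.
Proof.
move=> /simplex_onT Q_pmf.
by rewrite subr_ge0 rsum_le_ub //= lerBlDr lerDl rsum_ge0.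
Qed.

Let psi_convex x l Q1 Q2 : 0 <= l <= 1 -> K Q1 -> K Q2 ->
  psi x (mix l Q1 Q2) <= l * psi x Q1 + (1 - l) * psi x Q2.
Proof.
move=> l01 [Q10 _] [Q20 _]; have := rsum_concave x (ltW a1) l01 Q10 Q20.
by rewrite /psi; lra.
Qed.

Lemma umlautU_lt1 : umlautU_eq_minmax a W.
Proof.
have [x0 _] := card_gt0P HX.
have K0 : K !=set0 by exists (W x0); exact/simplex_onT.
have [Qs KQs Qs_min] :=
  exists_argmin_max_over K_compact psi_continuous K0.
have approx :=
  minimax_lower_approx HX K_mix rsum_ub_gt0 psi_bound psi_convex KQs Qs_min.
have Qs_pmf : is_pmf Qs by exact/simplex_onT.
apply: (umlautU_saddle Qs_pmf) => [Q Q_pmf|P P_pmf|r].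
- rewrite !maxD_lt1 //; apply: (Dsum_anti a1); first exact: rsum_min_ge0.
  by rewrite lerD2l lerN2; apply: Qs_min; exact/simplex_onT.
- rewrite joint_lt1 // maxD_lt1 //; apply: (Dsum_anti a1); first exact: rsum_min_ge0.
  exact/pmf_avg_ge/rsum_min_le.
rewrite maxD_lt1 // => lt_r.
set v := rsum_min Qs in lt_r; set t := expR ((a - 1) * r).
have v_lt_t : v < t.
  rewrite ltNge; apply/negP => t_le_v.
  have := Dsum_anti a1 (expR_ge0 _) t_le_v.
  by rewrite Dsum_expR ?lt_eqF // => /(lt_le_trans lt_r); rewrite ltxx.
have [P [[P_gt0 P1] le_P]] := approx (t - v) ltac:(by rewrite subr_gt0).
have P_pmf : is_pmf P by split => // x; exact/ltW.
exists P => // Q Q_pmf.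
rewrite joint_lt1 // -(Dsum_expR r) ?lt_eqF //; apply: (Dsum_anti a1).
  by apply: sumr_ge0 => x _; rewrite mulr_ge0 ?rsum_ge0 ?ltW.
have := le_P Q (proj2 (simplex_onT Q) Q_pmf).
under eq_bigr do rewrite mulrBr; rewrite sumrB -mulr_suml P1 mul1r.
by rewrite /v /rsum_min -/t; lra.
Qed.

End OrderBelow1.

End Renyi.

Theorem mainTheorem12 (R : realType) (X Y : finType) (W : X -> Y -> R) (a : R)
  (HX : (0 < #|X|)%N) (HW : forall x, is_pmf (W x))
  (ha0 : 0 < a) (ha1 : a != 1) :
  exists2 Q : Y -> R, is_pmf Q &
    (forall Q' : Y -> R, is_pmf Q' -> (maxD a W Q <= maxD a W Q')%E) /\
    umlautU a W = maxD a W Q.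
Proof.
have /orP[a_lt1|a_gt1] : (a < 1) || (1 < a) by rewrite -neq_lt.
- exact: umlautU_lt1.
- exact: umlautU_gt1.
Qed.
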